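(* Given a c.e. transitive relation $\prec$ on $\omega$ and a c.e. set $U\subseteq\omega$, one can effectively obtain (uniformly in indices for $\prec$ and $U$) a c.e. transitive relation $\sqsubset$ on $\omega$ such that $\mathcal{I}(\sqsubset)$ is computably homeomorphic to the effective space obtained from $\mathcal{I}(\prec)$ by adding the set $A=\{I\in\mathcal{I}(\prec)\mid (\forall x\in U)\, x\notin I\}$ as a c.e. open set to its topology.
   Context: For a transitive relation $\prec$ on $\omega$, an ideal is a non-empty set $I\subseteq\omega$ which is a lower set ($b\prec a\in I\Rightarrow b\in I$) and directed (for $a,b\in I$ there is $c\in I$ with $a\prec c$, $b\prec c$). $\mathcal{I}(\prec)$ is the space of all ideals with topology generated by $[n]_\prec=\{I\mid n\in I\}$, an effective space with base numbering $n\mapsto[n]_\prec$. Adding $A$ as a c.e. open set means taking the topology generated by the sets $[n]_\prec$ together with $A$, with the effective base consisting of the sets $[n]_\prec$ and $A\cap[n]_\prec$. Effective spaces are countably based $T_0$ spaces with a numbered base whose pairwise intersections are uniformly c.e. unions of basic sets; a map is computable if preimages of basic open sets are uniformly c.e. unions of basic open sets, and a computable homeomorphism is a homeomorphism computable in both directions. *)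

From Stdlib Require Import Arith Cantor.

Definition pair (a b : nat) : nat := Cantor.to_nat (a, b).
Definition unpair (n : nat) : nat * nat := Cantor.of_nat n.

(* Partial recursive functions nat -> nat (unary, tuples coded by pairing).
   A natural number c is read as a program via unpair c = (tag, rest):
     tag 0 : constant 0            tag 1 : successor
     tag 2 : first component       tag 3 : second component
     tag 4 : rest = <f,g>, x |-> pair (f x) (g x)
     tag 5 : rest = <f,g>, x |-> f (g x)
     tag 6 : rest = <f,g>, primitive recursion on pair a n:
             h(a,0) = f a,  h(a,m+1) = g (pair a (pair m (h(a,m))))
     tag 7 : rest = f, minimisation: x |-> least i with f (pair x i) = 0
             (all f (pair x j), j < i, defined)
     other : identity. *)
Fixpoint eval (fuel : nat) (c : nat) (x : nat) {struct fuel} : option nat :=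
  match fuel with
  | 0 => None
  | S fl =>
    let (tag, rest) := unpair c in
    match tag with
    | 0 => Some 0
    | 1 => Some (S x)
    | 2 => Some (fst (unpair x))
    | 3 => Some (snd (unpair x))
    | 4 => let (f, g) := unpair rest in
           match eval fl f x, eval fl g x with
           | Some u, Some v => Some (pair u v)
           | _, _ => None
           end
    | 5 => let (f, g) := unpair rest in
           match eval fl g x with
           | Some v => eval fl f v
           | None => None
           end
    | 6 => let (f, g) := unpair rest in
           let (a, n) := unpair x in
           (fix rec (m : nat) : option nat :=
              match m with
              | 0 => eval fl f a
              | S m' => match rec m' with
                        | Some r => eval fl g (pair a (pair m' r))
                        | None => None
                        end
              end) n
    | 7 => (fix search (i k : nat) {struct k} : option nat :=
              match k with
              | 0 => None
              | S k' => match eval fl rest (pair x i) with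
                        | Some 0 => Some i
                        | Some _ => search (S i) k'
                        | None => None
                        end
              end) 0 fl
    | _ => Some x
    end
  end.

Definition phi (e x y : nat) : Prop := exists fuel, eval fuel e x = Some y.

Definition W (e x : nat) : Prop := exists y, phi e x y.

Definition computable2 (t : nat -> nat -> nat) : Prop :=
  exists h, forall a b, phi h (pair a b) (t a b).

Definition ce_rel (e : nat) (a b : nat) : Prop := W e (pair a b).

Definition transitive (R : nat -> nat -> Prop) : Prop :=
  forall a b c, R a b -> R b c -> R a c.

Definition is_ideal (R : nat -> nat -> Prop) (I : nat -> Prop) : Prop :=
  (exists n, I n) /\
  (forall a b, R b a -> I a -> I b) /\
  (forall a b, I a -> I b -> exists c, I c /\ R a c /\ R b c).

Definition ideals (R : nat -> nat -> Prop) : Type := {I : nat -> Prop | is_ideal R I}.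

Definition ideal_base (R : nat -> nat -> Prop) (n : nat) (I : ideals R) : Prop :=
  proj1_sig I n.

Definition add_open_base {X : Type} (base : nat -> X -> Prop) (A : X -> Prop)
    (n : nat) (x : X) : Prop :=
  if Nat.even n then base (Nat.div2 n) x else A x /\ base (Nat.div2 n) x.

Definition computable_map {X Y : Type} (beta : nat -> X -> Prop)
    (gamma : nat -> Y -> Prop) (f : X -> Y) : Prop :=
  exists e, forall n x, gamma n (f x) <-> exists k, W e (pair n k) /\ beta k x.

Definition comp_homeomorphic {X Y : Type} (beta : nat -> X -> Prop)
    (gamma : nat -> Y -> Prop) : Prop :=
  exists (f : X -> Y) (g : Y -> X),
    (forall x, g (f x) = x) /\ (forall y, f (g y) = y) /\
    computable_map beta gamma f /\ computable_map gamma beta g.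

(* Write [n ≺ n'] for the given relation. The new relation [⊏] lives on codes
   [k = <m, s, c, H>] with point [n = m/2]: an even [m] stands for the basic set [[n]], an odd
   [m] for [A ∩ [n]]; [s] is a stage of the enumerations of [≺] and [U], [c] a bound and [H] a
   finite set of [≺]-predecessors of [n]. [k ⊏ k'] holds when [k'] has larger stage and bound,
   contains [n] and [H] in its set, is odd if [k] is, and is coherent at its stage: its set is
   [≺_s]-closed below its bound, lies [≺_s]-below its point, and meets [U_s] iff [k'] is even.
   Coherence only mentions finite stages, so [⊏] is c.e. uniformly in the indices, and it is
   transitive by construction.

   An ideal [I] of [≺] lifts to the ideal of codes whose point and set lie in [I] and which are
   even unless [I] avoids [U]; an ideal [J] of [⊏] projects to the set of its points. [J]
   contains an odd code iff its projection avoids [U], since coherent codes above an odd code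
   avoid [U] at every stage while even ones meet it.
   Both are computable: [[n]] and [A ∩ [n]] pull back to the codes with [m = 2n] and
   [m = 2n+1], and the basic set of [k] pulls back to the sets [[n']] or [A ∩ [n']] (matching
   the parity of [k]) with [n'] above the point and set of [k] at a common stage.

   The stage approximations of c.e. sets come from coding derivations of evaluation judgements,
   which a primitive recursive program can check. *)

From Stdlib Require Import Arith Lia List Cantor Classical ProofIrrelevance
  FunctionalExtensionality PropExtensionality.
Import ListNotations.

Arguments pair : simpl never.
Arguments unpair : simpl never.

Lemma unpair_pair a b : unpair (pair a b) = (a, b).
Proof. apply cancel_of_to. Qed.

Lemma pair_unpair n : pair (fst (unpair n)) (snd (unpair n)) = n.
Proof. unfold pair, unpair. rewrite <- surjective_pairing. apply cancel_to_of. Qed.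

Lemma fst_unpair_pair a b : fst (unpair (pair a b)) = a.
Proof. now rewrite unpair_pair. Qed.

Lemma snd_unpair_pair a b : snd (unpair (pair a b)) = b.
Proof. now rewrite unpair_pair. Qed.

#[local] Hint Rewrite fst_unpair_pair snd_unpair_pair : unpair.

Fixpoint rec_with (ev : nat -> nat -> option nat) (f g a m : nat) : option nat :=
  match m with
  | 0 => ev f a
  | S m' => match rec_with ev f g a m' with
            | Some r => ev g (pair a (pair m' r))
            | None => None
            end
  end.

Fixpoint search_with (ev : nat -> nat -> option nat) (f x i k : nat) : option nat :=
  match k with
  | 0 => None
  | S k' => match ev f (pair x i) with
            | Some 0 => Some i
            | Some _ => search_with ev f x (S i) k'
            | None => None
            end
  end.

Lemma eval_succ fl c x : eval (S fl) c x =
  match fst (unpair c) with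
  | 0 => Some 0
  | 1 => Some (S x)
  | 2 => Some (fst (unpair x))
  | 3 => Some (snd (unpair x))
  | 4 => match eval fl (fst (unpair (snd (unpair c)))) x,
               eval fl (snd (unpair (snd (unpair c)))) x with
         | Some u, Some v => Some (pair u v)
         | _, _ => None
         end
  | 5 => match eval fl (snd (unpair (snd (unpair c)))) x with
         | Some v => eval fl (fst (unpair (snd (unpair c)))) v
         | None => None
         end
  | 6 => rec_with (eval fl) (fst (unpair (snd (unpair c))))
           (snd (unpair (snd (unpair c)))) (fst (unpair x)) (snd (unpair x))
  | 7 => search_with (eval fl) (snd (unpair c)) x 0 fl
  | _ => Some x
  end.
Proof.
  cbn [eval]. destruct (unpair c) as [tag rest]. cbn [fst snd].
  destruct tag as [|[|[|[|[|[|[|[|tag]]]]]]]]; try reflexivity;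
    destruct (unpair rest) as [f g]; cbn [fst snd]; try reflexivity.
  - destruct (unpair x) as [a n]. cbn [fst snd].
    match goal with |- ?F n = _ =>
      enough (forall m, F m = rec_with (eval fl) f g a m) by auto end.
    induction m as [|m IH]; cbn; [reflexivity|]. now rewrite IH.
  - clear f g.
    match goal with |- ?F 0 fl = _ =>
      enough (forall k i, F i k = search_with (eval fl) rest x i k) by auto end.
    induction k as [|k IH]; intros i; cbn; [reflexivity|].
    destruct (eval fl rest (pair x i)) as [[|v]|]; auto.
Qed.

Definition evaluator_le (ev ev' : nat -> nat -> option nat) : Prop :=
  forall c x y, ev c x = Some y -> ev' c x = Some y.

Lemma rec_with_mono ev ev' f g a m y : evaluator_le ev ev' ->
  rec_with ev f g a m = Some y -> rec_with ev' f g a m = Some y.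
Proof.
  intros Hle. revert y. induction m as [|m IH]; cbn; intros y E; auto.
  destruct (rec_with ev f g a m) eqn:Em; [|discriminate].
  rewrite (IH _ eq_refl). auto.
Qed.

Lemma search_with_mono ev ev' f x y : evaluator_le ev ev' ->
  forall k i k', k <= k' -> search_with ev f x i k = Some y -> search_with ev' f x i k' = Some y.
Proof.
  intros Hle. induction k as [|k IH]; intros i k' Hk E; cbn in E; [discriminate|].
  destruct k' as [|k']; [lia|]. cbn.
  destruct (ev f (pair x i)) as [[|v]|] eqn:Ei; try discriminate;
    rewrite (Hle _ _ _ Ei); auto.
  apply IH; auto; lia.
Qed.

Lemma eval_le_succ fl : evaluator_le (eval fl) (eval (S fl)).
Proof.
  induction fl as [|fl IH]; intros c x y E; [discriminate|].
  rewrite eval_succ in E |- *.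
  destruct (fst (unpair c)) as [|[|[|[|[|[|[|[|tag]]]]]]]]; auto.
  - destruct (eval fl (fst (unpair (snd (unpair c)))) x) eqn:E1; [|discriminate].
    destruct (eval fl (snd (unpair (snd (unpair c)))) x) eqn:E2; [|discriminate].
    now rewrite (IH _ _ _ E1), (IH _ _ _ E2).
  - destruct (eval fl (snd (unpair (snd (unpair c)))) x) eqn:E1; [|discriminate].
    now rewrite (IH _ _ _ E1), (IH _ _ _ E).
  - now apply (rec_with_mono (eval fl)).
  - apply (search_with_mono (eval fl)) with (k := fl); auto.
Qed.

Lemma eval_mono fl fl' c x y : fl <= fl' -> eval fl c x = Some y -> eval fl' c x = Some y.
Proof. induction 1; auto. intros E. now apply eval_le_succ, IHle. Qed.

Lemma eval_det fl fl' c x y y' :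
  eval fl c x = Some y -> eval fl' c x = Some y' -> y = y'.
Proof.
  intros E E'. destruct (Nat.le_ge_cases fl fl') as [H|H].
  - rewrite (eval_mono _ _ _ _ _ H E) in E'. congruence.
  - rewrite (eval_mono _ _ _ _ _ H E') in E. congruence.
Qed.

Definition evals (c x y : nat) : Prop :=
  exists fl0, forall fl, fl0 <= fl -> eval fl c x = Some y.

Lemma phi_evals c x y : phi c x y <-> evals c x y.
Proof.
  split.
  - intros [fl E]. exists fl. intros. eapply eval_mono; eauto.
  - intros [fl0 H]. exists fl0. apply H. lia.
Qed.

Lemma search_with_sound ev f x i k y :
  search_with ev f x i k = Some y -> ev f (pair x y) = Some 0.
Proof.
  revert i. induction k as [|k IH]; intros i E; cbn in E; [discriminate|].
  destruct (ev f (pair x i)) as [[|v]|] eqn:Ei; try discriminate; eauto.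
  congruence.
Qed.

Lemma search_with_ge ev f x i k y : search_with ev f x i k = Some y -> i <= y.
Proof.
  revert i. induction k as [|k IH]; intros i E; cbn in E; [discriminate|].
  destruct (ev f (pair x i)) as [[|v]|]; try discriminate.
  - injection E. lia.
  - apply IH in E. lia.
Qed.

Lemma search_with_complete ev f x (D : nat -> nat) w :
  (forall j, j <= w -> ev f (pair x j) = Some (D j)) -> D w = 0 ->
  forall k i, i <= w < i + k -> exists y, search_with ev f x i k = Some y.
Proof.
  intros Hev Hw. induction k as [|k IH]; intros i Hi; [lia|]. cbn.
  rewrite Hev by lia. destruct (D i) eqn:Di; eauto.
  apply IH. destruct (Nat.eq_dec i w); [congruence|lia].
Qed.

(** * Primitive recursive programs *)

Inductive prog :=
  PZero | PSucc | PFst | PSnd | PId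
| PPair (p q : prog) | PComp (p q : prog) | PRec (p q : prog).

Fixpoint code (p : prog) : nat :=
  match p with
  | PZero => pair 0 0
  | PSucc => pair 1 0
  | PFst => pair 2 0
  | PSnd => pair 3 0
  | PId => pair 8 0
  | PPair p q => pair 4 (pair (code p) (code q))
  | PComp p q => pair 5 (pair (code p) (code q))
  | PRec p q => pair 6 (pair (code p) (code q))
  end.

Definition rec_den (F G : nat -> nat) (a n : nat) : nat :=
  nat_rect (fun _ => nat) (F a) (fun m r => G (pair a (pair m r))) n.

Fixpoint den (p : prog) (x : nat) : nat :=
  match p with
  | PZero => 0
  | PSucc => S x
  | PFst => fst (unpair x)
  | PSnd => snd (unpair x)
  | PId => x
  | PPair p q => pair (den p x) (den q x)
  | PComp p q => den p (den q x)
  | PRec p q => rec_den (den p) (den q) (fst (unpair x)) (snd (unpair x))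
  end.

Lemma evals_code p x : evals (code p) x (den p x).
Proof.
  revert x. induction p as [| | | | |p IHp q IHq|p IHp q IHq|p IHp q IHq]; intros x.
  1-5: exists 1; intros [|fl] Hl; [lia|]; now rewrite eval_succ; autorewrite with unpair.
  - destruct (IHp x) as [f1 H1], (IHq x) as [f2 H2].
    exists (S (f1 + f2)). intros [|fl] Hl; [lia|].
    cbn [code]; rewrite eval_succ; autorewrite with unpair. now rewrite H1, H2 by lia.
  - destruct (IHq x) as [f2 H2], (IHp (den q x)) as [f1 H1].
    exists (S (f1 + f2)). intros [|fl] Hl; [lia|].
    cbn [code]; rewrite eval_succ; autorewrite with unpair. rewrite H2 by lia. apply H1. lia.
  - set (a := fst (unpair x)).
    assert (Hrec : forall m, exists f0, forall fl, f0 <= fl ->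
      rec_with (eval fl) (code p) (code q) a m = Some (rec_den (den p) (den q) a m)).
    { induction m as [|m [f0 H0]].
      - destruct (IHp a) as [f1 H1]. exists f1. intros. cbn. auto.
      - destruct (IHq (pair a (pair m (rec_den (den p) (den q) a m)))) as [f1 H1].
        exists (f0 + f1). intros fl Hl. cbn. rewrite H0 by lia. apply H1. lia. }
    destruct (Hrec (snd (unpair x))) as [f0 H0]. exists (S f0). intros [|fl] Hl; [lia|].
    cbn [code den]; rewrite eval_succ; autorewrite with unpair. apply H0. lia.
Qed.

Lemma phi_code p x : phi (code p) x (den p x).
Proof. apply phi_evals, evals_code. Qed.

Definition mu (p : prog) : nat := pair 7 (code p).

Lemma W_mu p x : W (mu p) x <-> exists i, den p (pair x i) = 0.
Proof.
  split.
  - intros [y [[|fl] E]]; [discriminate|]. exists y.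
    unfold mu in E. rewrite eval_succ in E. autorewrite with unpair in E.
    apply search_with_sound in E. destruct (evals_code p (pair x y)) as [f0 H0].
    symmetry. exact (eval_det _ _ _ _ _ _ E (H0 f0 (le_n _))).
  - intros [i Hi].
    assert (Hall : forall N, exists f0, forall fl, f0 <= fl -> forall j, j < N ->
               eval fl (code p) (pair x j) = Some (den p (pair x j))).
    { induction N as [|N [f0 H0]]; [exists 0; intros; lia|].
      destruct (evals_code p (pair x N)) as [f1 H1].
      exists (f0 + f1). intros fl Hl j Hj.
      destruct (Nat.eq_dec j N); [subst; apply H1; lia|]. apply H0; lia. }
    destruct (Hall (S i)) as [f0 H0].
    destruct (search_with_complete (eval (f0 + S i)) (code p) x (fun j => den p (pair x j)) i)
      with (k := f0 + S i) (i := 0) as [y Hy]; auto; [intros; apply H0; lia|lia|].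
    exists y, (S (f0 + S i)). unfold mu. rewrite eval_succ. now autorewrite with unpair.
Qed.

Lemma den_PZero x : den PZero x = 0. Proof. reflexivity. Qed.
Lemma den_PSucc x : den PSucc x = S x. Proof. reflexivity. Qed.
Lemma den_PFst x : den PFst x = fst (unpair x). Proof. reflexivity. Qed.
Lemma den_PSnd x : den PSnd x = snd (unpair x). Proof. reflexivity. Qed.
Lemma den_PId x : den PId x = x. Proof. reflexivity. Qed.
Lemma den_PPair p q x : den (PPair p q) x = pair (den p x) (den q x). Proof. reflexivity. Qed.
Lemma den_PComp p q x : den (PComp p q) x = den p (den q x). Proof. reflexivity. Qed.

#[local] Hint Rewrite den_PZero den_PSucc den_PFst den_PSnd den_PId den_PPair den_PComp : den.

Fixpoint pconst (n : nat) : prog :=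
  match n with 0 => PZero | S n => PComp PSucc (pconst n) end.

Lemma den_pconst n x : den (pconst n) x = n.
Proof. induction n; cbn; auto. Qed.

Definition pfst (p : prog) : prog := PComp PFst p.
Definition psnd (p : prog) : prog := PComp PSnd p.
Definition papp2 (o p q : prog) : prog := PComp o (PPair p q).

Lemma den_pfst p x : den (pfst p) x = fst (unpair (den p x)). Proof. reflexivity. Qed.
Lemma den_psnd p x : den (psnd p) x = snd (unpair (den p x)). Proof. reflexivity. Qed.
Lemma den_papp2 o p q x : den (papp2 o p q) x = den o (pair (den p x) (den q x)).
Proof. reflexivity. Qed.

Definition pif0 (c p q : prog) : prog := PComp (PRec p (PComp q PFst)) (PPair PId c).

Lemma den_pif0 c p q x :
  den (pif0 c p q) x = match den c x with 0 => den p x | S _ => den q x end.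
Proof. cbn. autorewrite with unpair. destruct (den c x); cbn; now autorewrite with unpair. Qed.

Definition ploop (init body cnt : prog) : prog := PComp (PRec init body) (PPair PId cnt).

Lemma den_ploop init body cnt x :
  den (ploop init body cnt) x = rec_den (den init) (den body) x (den cnt x).
Proof. cbn. now autorewrite with unpair. Qed.

Lemma rec_den_succ F G a m : rec_den F G a (S m) = G (pair a (pair m (rec_den F G a m))).
Proof. reflexivity. Qed.

(* Inside a loop body the argument is [pair x (pair m r)]: parameter, counter, accumulator. *)
Definition loop_param : prog := PFst.
Definition loop_index : prog := PComp PFst PSnd.
Definition loop_acc : prog := PComp PSnd PSnd.

Definition ppred : prog := ploop PZero loop_index PId.
Definition padd : prog := PRec PId (PComp PSucc loop_acc).
Definition psub : prog := PRec PId (PComp ppred loop_acc).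

Lemma den_ppred x : den ppred x = Nat.pred x.
Proof. unfold ppred. rewrite den_ploop. destruct x; cbn; now autorewrite with unpair. Qed.

Lemma den_padd a b : den padd (pair a b) = a + b.
Proof.
  cbn [den padd]. autorewrite with unpair. induction b as [|b IH]; [cbn; lia|].
  rewrite rec_den_succ, IH. cbn. autorewrite with unpair. lia.
Qed.

Lemma den_psub a b : den psub (pair a b) = a - b.
Proof.
  cbn [den psub]. autorewrite with unpair. induction b as [|b IH]; [cbn; lia|].
  rewrite rec_den_succ, IH. cbn -[ppred]. rewrite den_ppred. autorewrite with unpair. lia.
Qed.

Definition bool_code (b : bool) : nat := if b then 0 else 1.

Lemma bool_code_eq_0 b : bool_code b = 0 <-> b = true.
Proof. destruct b; cbn; split; congruence. Qed.

Lemma bool_code_inj b b' : bool_code b = bool_code b' <-> b = b'.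
Proof. destruct b, b'; cbn; split; congruence. Qed.

Definition pand (p q : prog) : prog := papp2 padd p q.
Definition pnot (p : prog) : prog := pif0 p (pconst 1) (pconst 0).
Definition peqb (p q : prog) : prog :=
  pif0 (pand (papp2 psub p q) (papp2 psub q p)) (pconst 0) (pconst 1).
Definition pltb (p q : prog) : prog := pif0 (papp2 psub (PComp PSucc p) q) (pconst 0) (pconst 1).
Definition pif_eq (p : prog) (n : nat) (q r : prog) : prog := pif0 (peqb p (pconst n)) q r.

Lemma den_pand p q x : den (pand p q) x = den p x + den q x.
Proof. unfold pand. now rewrite den_papp2, den_padd. Qed.

Lemma den_pnot p x : den (pnot p) x = match den p x with 0 => 1 | S _ => 0 end.
Proof. unfold pnot. now rewrite den_pif0, !den_pconst. Qed.

Lemma den_peqb p q x : den (peqb p q) x = bool_code (den p x =? den q x).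
Proof.
  unfold peqb. rewrite den_pif0, den_pand, !den_papp2, !den_psub, !den_pconst.
  destruct (Nat.eqb_spec (den p x) (den q x)) as [E|E]; cbn.
  - rewrite E, Nat.sub_diag. reflexivity.
  - destruct (_ + _) eqn:E2; [lia|reflexivity].
Qed.

Lemma den_pltb p q x : den (pltb p q) x = bool_code (den p x <? den q x).
Proof.
  unfold pltb. rewrite den_pif0, den_papp2, den_psub, !den_pconst, den_PComp, den_PSucc.
  destruct (Nat.ltb_spec (den p x) (den q x)); destruct (S (den p x) - den q x) eqn:E;
    cbn; auto; lia.
Qed.

Lemma den_pif_eq p n q r x :
  den (pif_eq p n q r) x = if den p x =? n then den q x else den r x.
Proof. unfold pif_eq. rewrite den_pif0, den_peqb, den_pconst. now destruct (_ =? n). Qed.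

#[local] Hint Rewrite den_pconst den_pfst den_psnd den_papp2 den_pif0 den_ppred den_padd
  den_psub den_pand den_pnot den_peqb den_pltb den_pif_eq : den.

(* A program [p] used as a predicate holds at [x] when [den p x = 0]. *)

Lemma holds_pand p q x : den (pand p q) x = 0 <-> den p x = 0 /\ den q x = 0.
Proof. rewrite den_pand. apply Nat.eq_add_0. Qed.

Lemma holds_pnot p x : den (pnot p) x = 0 <-> den p x <> 0.
Proof. rewrite den_pnot. destruct (den p x); intuition discriminate. Qed.

Definition pimp (p q : prog) : prog := pif0 p q (pconst 0).

Lemma holds_pimp p q x : den (pimp p q) x = 0 <-> (den p x = 0 -> den q x = 0).
Proof. unfold pimp. rewrite den_pif0, den_pconst. destruct (den p x); intuition discriminate. Qed.

Lemma holds_peqb p q x : den (peqb p q) x = 0 <-> den p x = den q x.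
Proof. rewrite den_peqb, bool_code_eq_0. apply Nat.eqb_eq. Qed.

Lemma holds_pltb p q x : den (pltb p q) x = 0 <-> den p x < den q x.
Proof. rewrite den_pltb, bool_code_eq_0. apply Nat.ltb_lt. Qed.

Definition pforall (P cnt : prog) : prog :=
  ploop PZero (pand loop_acc (PComp P (PPair loop_param loop_index))) cnt.

Definition pexists (P cnt : prog) : prog :=
  ploop (pconst 1) (pif0 loop_acc PZero (PComp P (PPair loop_param loop_index))) cnt.

Lemma holds_pforall P cnt x :
  den (pforall P cnt) x = 0 <-> forall m, m < den cnt x -> den P (pair x m) = 0.
Proof.
  unfold pforall. rewrite den_ploop. induction (den cnt x) as [|N IH].
  - split; [lia|reflexivity].
  - rewrite rec_den_succ, den_pand. set (r := rec_den _ _ x N) in *.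
    cbn [den loop_acc loop_param loop_index]. autorewrite with unpair.
    rewrite Nat.eq_add_0, IH. split.
    + intros [H1 H2] m Hm. destruct (Nat.eq_dec m N); subst; auto. apply H1. lia.
    + intros H. split; intros; apply H; lia.
Qed.

Lemma holds_pexists P cnt x :
  den (pexists P cnt) x = 0 <-> exists m, m < den cnt x /\ den P (pair x m) = 0.
Proof.
  unfold pexists. rewrite den_ploop. induction (den cnt x) as [|N IH].
  - split; [discriminate|]. intros [m [Hm _]]. lia.
  - rewrite rec_den_succ, den_pif0. set (r := rec_den _ _ x N) in *.
    cbn [den loop_acc loop_param loop_index]. autorewrite with unpair.
    destruct r as [|r].
    + split; auto. intros _. destruct (proj1 IH eq_refl) as [m [Hm Pm]]. eauto.
    + split; [eauto|]. intros [m [Hm Pm]]. destruct (Nat.eq_dec m N); [subst; auto|].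
      enough (S r = 0) by discriminate. apply IH. exists m. split; auto. lia.
Qed.

Definition tail_code (z : nat) : nat := snd (unpair z).

Fixpoint decode_list (n b : nat) : list nat :=
  match n with 0 => [] | S n => fst (unpair b) :: decode_list n (tail_code b) end.

Fixpoint encode_list (l : list nat) : nat :=
  match l with [] => 0 | a :: l => pair a (encode_list l) end.

Definition decode (L : nat) : list nat := decode_list (fst (unpair L)) (snd (unpair L)).
Definition encode (l : list nat) : nat := pair (length l) (encode_list l).

Lemma decode_encode l : decode (encode l) = l.
Proof.
  unfold decode, encode. autorewrite with unpair.
  induction l as [|a l IH]; cbn; auto. unfold tail_code. autorewrite with unpair. now rewrite IH.
Qed.

Lemma length_decode_list n b : length (decode_list n b) = n.
Proof. revert b; induction n; cbn; auto. Qed.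

Lemma nth_decode_list n b m :
  m < n -> nth m (decode_list n b) 0 = fst (unpair (Nat.iter m tail_code b)).
Proof.
  revert b m. induction n as [|n IH]; intros b [|m] Hm; cbn [decode_list nth]; try lia; auto.
  rewrite IH by lia. now rewrite Nat.iter_succ_r.
Qed.

Lemma skipn_decode_list n b m :
  m <= n -> skipn m (decode_list n b) = decode_list (n - m) (Nat.iter m tail_code b).
Proof.
  revert b m. induction n as [|n IH]; intros b [|m] Hm; cbn [decode_list skipn Nat.sub]; try lia; auto.
  rewrite IH by lia. now rewrite Nat.iter_succ_r.
Qed.

Lemma forall_decode_list n b (Q : nat -> Prop) :
  (forall m, m < n -> Q (fst (unpair (Nat.iter m tail_code b)))) <->
  (forall y, In y (decode_list n b) -> Q y).
Proof.
  split.
  - intros H y Hy. apply (In_nth _ _ 0) in Hy as [m [Hm <-]].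
    rewrite length_decode_list in Hm. rewrite nth_decode_list by auto. auto.
  - intros H m Hm. rewrite <- nth_decode_list with (n := n) by auto.
    apply H, nth_In. now rewrite length_decode_list.
Qed.

Lemma exists_decode_list n b (Q : nat -> Prop) :
  (exists m, m < n /\ Q (fst (unpair (Nat.iter m tail_code b)))) <->
  (exists y, In y (decode_list n b) /\ Q y).
Proof.
  split.
  - intros [m [Hm Qm]]. exists (nth m (decode_list n b) 0).
    rewrite nth_decode_list by auto. split; auto.
    rewrite <- nth_decode_list with (n := n) by auto. apply nth_In.
    now rewrite length_decode_list.
  - intros [y [Hy Qy]]. apply (In_nth _ _ 0) in Hy as [m [Hm E]].
    rewrite length_decode_list in Hm. exists m. split; auto.
    rewrite <- nth_decode_list with (n := n) by auto. congruence.
Qed.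

Definition pdrop : prog := PRec PId (PComp PSnd loop_acc).
Definition pnth (l m : prog) : prog := pfst (papp2 pdrop l m).

Lemma den_pdrop b m : den pdrop (pair b m) = Nat.iter m tail_code b.
Proof.
  cbn [den pdrop]. autorewrite with unpair. induction m as [|m IH]; [reflexivity|].
  rewrite rec_den_succ, IH. cbn. now autorewrite with unpair.
Qed.

Lemma den_pnth l m x : den (pnth l m) x = fst (unpair (Nat.iter (den m x) tail_code (den l x))).
Proof. unfold pnth. now rewrite den_pfst, den_papp2, den_pdrop. Qed.

#[local] Hint Rewrite den_pnth : den.

Definition pforall_in (P lst : prog) : prog :=
  pforall (PComp P (PPair PFst (pnth (psnd (PComp lst PFst)) PSnd))) (pfst lst).

Definition pexists_in (P lst : prog) : prog :=
  pexists (PComp P (PPair PFst (pnth (psnd (PComp lst PFst)) PSnd))) (pfst lst).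

Lemma holds_pforall_in P lst x :
  den (pforall_in P lst) x = 0 <-> forall y, In y (decode (den lst x)) -> den P (pair x y) = 0.
Proof.
  unfold pforall_in, decode.
  etransitivity; [|apply (forall_decode_list _ _ (fun y => den P (pair x y) = 0))].
  rewrite holds_pforall, den_pfst. split; intros H m Hm; specialize (H m Hm);
    autorewrite with den unpair in *; exact H.
Qed.

Lemma holds_pexists_in P lst x :
  den (pexists_in P lst) x = 0 <-> exists y, In y (decode (den lst x)) /\ den P (pair x y) = 0.
Proof.
  unfold pexists_in, decode.
  etransitivity; [|apply (exists_decode_list _ _ (fun y => den P (pair x y) = 0))].
  rewrite holds_pexists, den_pfst. split; intros [m [Hm H]]; exists m; split; auto;
    autorewrite with den unpair in *; exact H.
Qed.

(** * Derivations of evaluation judgements *)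

(* Claims are coded as numbers: [eval_claim c x y] says that program [c] maps [x] to [y];
   [search_claim f x i r] says that the zero search of [f] on [pair x i], [pair x (S i)], ...
   returns [r]. *)
Definition eval_claim (c x y : nat) : nat := pair 0 (pair c (pair x y)).
Definition search_claim (f x i r : nat) : nat := pair 1 (pair f (pair x (pair i r))).

(* One rule of the big-step semantics of [eval]; [h] is the intermediate value
   (of a composition or recursion step, or the nonzero value met by a search). *)
Definition eval_step (c x y h : nat) (P : nat -> Prop) : Prop :=
  let f := fst (unpair (snd (unpair c))) in
  let g := snd (unpair (snd (unpair c))) in
  match fst (unpair c) with
  | 0 => y = 0
  | 1 => y = S x
  | 2 => y = fst (unpair x)
  | 3 => y = snd (unpair x)
  | 4 => P (eval_claim f x (fst (unpair y))) /\ P (eval_claim g x (snd (unpair y)))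
  | 5 => P (eval_claim g x h) /\ P (eval_claim f h y)
  | 6 => match snd (unpair x) with
         | 0 => P (eval_claim f (fst (unpair x)) y)
         | S n => P (eval_claim c (pair (fst (unpair x)) n) h) /\
                  P (eval_claim g (pair (fst (unpair x)) (pair n h)) y)
         end
  | 7 => P (search_claim (snd (unpair c)) x 0 y)
  | _ => y = x
  end.

Definition search_step (f x i r h : nat) (P : nat -> Prop) : Prop :=
  if r =? i then P (eval_claim f (pair x i) 0)
  else h <> 0 /\ P (eval_claim f (pair x i) h) /\ P (search_claim f x (S i) r).

Definition justified (j h : nat) (P : nat -> Prop) : Prop :=
  let d := snd (unpair j) in
  match fst (unpair j) with
  | 0 => eval_step (fst (unpair d)) (fst (unpair (snd (unpair d))))
           (snd (unpair (snd (unpair d)))) h P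
  | 1 => search_step (fst (unpair d)) (fst (unpair (snd (unpair d))))
           (fst (unpair (snd (unpair (snd (unpair d))))))
           (snd (unpair (snd (unpair (snd (unpair d)))))) h P
  | _ => False
  end.

Definition search_true (f x i r : nat) : Prop :=
  exists f0, forall fl k, f0 <= fl -> f0 <= k -> search_with (eval fl) f x i k = Some r.

Definition claim_true (j : nat) : Prop :=
  let d := snd (unpair j) in
  match fst (unpair j) with
  | 0 => evals (fst (unpair d)) (fst (unpair (snd (unpair d)))) (snd (unpair (snd (unpair d))))
  | 1 => search_true (fst (unpair d)) (fst (unpair (snd (unpair d))))
           (fst (unpair (snd (unpair (snd (unpair d))))))
           (snd (unpair (snd (unpair (snd (unpair d))))))
  | _ => True
  end.

Lemma justified_eval_claim c x y h P : justified (eval_claim c x y) h P = eval_step c x y h P.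
Proof. unfold justified, eval_claim. now autorewrite with unpair. Qed.

Lemma justified_search_claim f x i r h P :
  justified (search_claim f x i r) h P = search_step f x i r h P.
Proof. unfold justified, search_claim. now autorewrite with unpair. Qed.

Lemma claim_true_eval c x y : claim_true (eval_claim c x y) <-> evals c x y.
Proof. unfold claim_true, eval_claim. autorewrite with unpair. reflexivity. Qed.

Lemma claim_true_search f x i r : claim_true (search_claim f x i r) <-> search_true f x i r.
Proof. unfold claim_true, search_claim. autorewrite with unpair. reflexivity. Qed.

Lemma claim_cases j :
  (exists c x y, j = eval_claim c x y) \/ (exists f x i r, j = search_claim f x i r) \/
  (forall h P, ~ justified j h P).
Proof.
  rewrite <- (pair_unpair j). unfold justified. autorewrite with unpair.
  set (d := snd (unpair j)). rewrite <- (pair_unpair d), <- (pair_unpair (snd (unpair d))).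
  destruct (fst (unpair j)) as [|[|k]].
  - left. do 3 eexists. reflexivity.
  - right; left. rewrite <- (pair_unpair (snd (unpair (snd (unpair d))))). do 4 eexists. reflexivity.
  - right; right. auto.
Qed.

Lemma evals_of_succ c x y :
  (exists f0, forall fl, f0 <= fl -> eval (S fl) c x = Some y) -> evals c x y.
Proof. intros [f0 H]. exists (S f0). intros [|fl] Hl; [lia|]. apply H. lia. Qed.

Section Soundness.
Variable P : nat -> Prop.
Hypothesis P_true : forall j, P j -> claim_true j.

Lemma P_evals c x y : P (eval_claim c x y) -> evals c x y.
Proof. intros H. now apply claim_true_eval, P_true. Qed.

Lemma eval_step_sound c x y h : eval_step c x y h P -> evals c x y.
Proof.
  unfold eval_step. intros H. apply evals_of_succ. setoid_rewrite eval_succ.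
  destruct (fst (unpair c)) as [|[|[|[|[|[|[|[|tag]]]]]]]] eqn:Ec;
    try (exists 0; intros; now subst).
  - destruct H as [[f1 H1]%P_evals [f2 H2]%P_evals]. exists (f1 + f2). intros fl Hl.
    rewrite H1, H2 by lia. now rewrite pair_unpair.
  - destruct H as [[f1 H1]%P_evals [f2 H2]%P_evals]. exists (f1 + f2). intros fl Hl.
    rewrite H1 by lia. apply H2. lia.
  - destruct (snd (unpair x)) as [|n].
    + apply P_evals in H as [f1 H1]. exists f1. intros. cbn. auto.
    + destruct H as [[f1 H1]%P_evals [f2 H2]%P_evals]. exists (f1 + f2). intros fl Hl.
      specialize (H1 (S fl) ltac:(lia)). rewrite eval_succ, Ec in H1.
      autorewrite with unpair in H1.
      cbn. rewrite H1. apply H2. lia.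
  - apply P_true, claim_true_search in H as [f0 H0]. exists f0. intros. apply H0; auto.
Qed.

Lemma search_step_sound f x i r h : search_step f x i r h P -> search_true f x i r.
Proof.
  unfold search_step. destruct (Nat.eqb_spec r i) as [->|Hri].
  - intros [f1 H1]%P_evals. exists (S f1). intros fl [|k] Hfl Hk; [lia|]. cbn.
    now rewrite H1 by lia.
  - intros [Hh [[f1 H1]%P_evals H2%P_true%claim_true_search]]. destruct H2 as [f2 H2].
    exists (S (f1 + f2)). intros fl [|k] Hfl Hk; [lia|]. cbn. rewrite H1 by lia.
    destruct h; [congruence|]. apply H2; lia.
Qed.

Lemma justified_sound j h : justified j h P -> claim_true j.
Proof.
  destruct (claim_cases j) as [(c & x & y & ->)|[(f & x & i & r & ->)|Hj]]; intros H.
  - apply claim_true_eval. rewrite justified_eval_claim in H. eapply eval_step_sound; eauto.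
  - apply claim_true_search. rewrite justified_search_claim in H. eapply search_step_sound; eauto.
  - now apply Hj in H.
Qed.
End Soundness.

Lemma justified_mono j h (P Q : nat -> Prop) :
  (forall J, P J -> Q J) -> justified j h P -> justified j h Q.
Proof.
  intros HPQ. unfold justified, eval_step, search_step.
  repeat match goal with |- context [match ?X with _ => _ end] => destruct X end; firstorder.
Qed.

Lemma justified_ext j h (P Q : nat -> Prop) :
  (forall J, P J <-> Q J) -> (justified j h P <-> justified j h Q).
Proof. intros H. split; apply justified_mono; firstorder. Qed.

(* A derivation is a list of pairs (claim, hint), each justified by the claims after it. *)
Definition entry_claim (e : nat) : nat := fst (unpair e).

Fixpoint derivation (L : list nat) : Prop :=
  match L with
  | [] => True
  | e :: L' => justified (entry_claim e) (snd (unpair e)) (fun J => In J (map entry_claim L')) /\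
               derivation L'
  end.

Lemma derivation_sound L : derivation L -> forall J, In J (map entry_claim L) -> claim_true J.
Proof.
  induction L as [|e L IH]; cbn; [tauto|]. intros [H1 H2] J [<-|HJ]; auto.
  eapply justified_sound; [|exact H1]. auto.
Qed.

Lemma derivation_app L1 L2 : derivation L1 -> derivation L2 -> derivation (L2 ++ L1).
Proof.
  intros H1. induction L2 as [|e L2 IH]; cbn; auto. intros [He H2]. split; auto.
  eapply justified_mono; [|exact He]. intros J HJ. rewrite map_app. apply in_or_app. auto.
Qed.

Lemma derivation_suffix L1 L2 : derivation (L1 ++ L2) -> derivation L2.
Proof. induction L1; cbn; tauto. Qed.

Definition derivable (J : nat) : Prop := exists L, derivation L /\ In J (map entry_claim L).

Lemma derivations_merge Js : (forall J, In J Js -> derivable J) ->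
  exists L, derivation L /\ forall J, In J Js -> In J (map entry_claim L).
Proof.
  induction Js as [|J0 Js IH]; intros H; [exists []; cbn; tauto|].
  destruct (H J0) as [L1 [D1 I1]]; [now left|].
  destruct IH as [L2 [D2 I2]]; [intros; apply H; now right|].
  exists (L2 ++ L1). split; [now apply derivation_app|].
  intros J [<-|HJ]; rewrite map_app; apply in_or_app; auto.
Qed.

Lemma derivable_step j h Js : (forall J, In J Js -> derivable J) ->
  justified j h (fun J => In J Js) -> derivable j.
Proof.
  intros HJs Hj. destruct (derivations_merge Js HJs) as [L [DL IL]].
  exists (pair j h :: L). cbn. unfold entry_claim at 1 3. autorewrite with unpair.
  split; auto. split; [|exact DL]. eapply justified_mono; [|exact Hj]. auto.
Qed.

Lemma derivable_eval_step c x y h Js : (forall J, In J Js -> derivable J) ->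
  eval_step c x y h (fun J => In J Js) -> derivable (eval_claim c x y).
Proof. intros HJs Hs. apply (derivable_step _ h Js HJs). now rewrite justified_eval_claim. Qed.

Lemma search_with_derivable ev f x :
  (forall a b, ev f a = Some b -> derivable (eval_claim f a b)) ->
  forall k i z, search_with ev f x i k = Some z -> derivable (search_claim f x i z).
Proof.
  intros Hev. induction k as [|k IHk]; intros i z Ez; cbn in Ez; [discriminate|].
  destruct (ev f (pair x i)) as [[|v]|] eqn:Ev; try discriminate.
  - injection Ez as <-. apply (derivable_step _ 0 [eval_claim f (pair x i) 0]).
    + intros J [<-|[]]; eauto.
    + rewrite justified_search_claim. unfold search_step. rewrite Nat.eqb_refl. cbn. auto.
  - apply (derivable_step _ (S v) [eval_claim f (pair x i) (S v); search_claim f x (S i) z]).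
    + intros J [<-|[<-|[]]]; eauto.
    + rewrite justified_search_claim. unfold search_step. apply search_with_ge in Ez.
      destruct (Nat.eqb_spec z i); [lia|]. cbn. auto.
Qed.

Lemma eval_derivable fl c x y : eval fl c x = Some y -> derivable (eval_claim c x y).
Proof.
  revert c x y. induction fl as [|fl IH]; intros c x y E; [discriminate|].
  rewrite eval_succ in E. pose proof (derivable_eval_step c) as Hstep. unfold eval_step in Hstep.
  set (f := fst (unpair (snd (unpair c)))) in *. set (g := snd (unpair (snd (unpair c)))) in *.
  destruct (fst (unpair c)) as [|[|[|[|[|[|[|[|tag]]]]]]]];
    try (injection E as <-; now apply (Hstep x _ 0 [])).
  - destruct (eval fl f x) as [v|] eqn:Ef; [|discriminate].
    destruct (eval fl g x) as [w|] eqn:Eg; [|discriminate]. injection E as <-.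
    apply (Hstep x _ 0 [eval_claim f x v; eval_claim g x w]).
    + intros J [<-|[<-|[]]]; eauto.
    + autorewrite with unpair. cbn. auto.
  - destruct (eval fl g x) as [v|] eqn:Eg; [|discriminate].
    apply (Hstep x y v [eval_claim g x v; eval_claim f v y]); [|cbn; auto].
    intros J [<-|[<-|[]]]; eauto.
  - set (a := fst (unpair x)).
    assert (Hrec : forall n r, rec_with (eval fl) f g a n = Some r ->
                     derivable (eval_claim c (pair a n) r)).
    { induction n as [|n IHn]; intros r Er; cbn in Er.
      - apply (Hstep _ r 0 [eval_claim f a r]); [intros J [<-|[]]; eauto|].
        autorewrite with unpair. cbn. auto.
      - destruct (rec_with (eval fl) f g a n) as [r'|] eqn:Er'; [|discriminate].
        apply (Hstep _ r r' [eval_claim c (pair a n) r'; eval_claim g (pair a (pair n r')) r]).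
        + intros J [<-|[<-|[]]]; eauto.
        + autorewrite with unpair. cbn. auto. }
    rewrite <- (pair_unpair x). now apply Hrec.
  - apply (Hstep x y 0 [search_claim (snd (unpair c)) x 0 y]); [|cbn; auto].
    intros J [<-|[]]. eapply search_with_derivable; eauto.
Qed.

(** * Stage approximations of c.e. sets *)

Definition claims_eval (c x j : nat) : Prop := exists y, j = eval_claim c x y.

Lemma claims_eval_iff c x j : claims_eval c x j <->
  fst (unpair j) = 0 /\ fst (unpair (snd (unpair j))) = c /\
  fst (unpair (snd (unpair (snd (unpair j))))) = x.
Proof.
  unfold claims_eval, eval_claim. split.
  - intros [y ->]. now autorewrite with unpair.
  - intros (H0 & Hc & Hx). exists (snd (unpair (snd (unpair (snd (unpair j)))))).
    rewrite <- Hx, <- Hc, !pair_unpair, <- H0. now rewrite pair_unpair.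
Qed.

(* Checking a coded derivation is primitive recursive, so this approximation of [W c]
   by stages is decidable. *)
Definition W_stage (c x t : nat) : Prop :=
  exists k, k <= t /\ derivation (decode k) /\
    exists e l, decode k = e :: l /\ claims_eval c x (entry_claim e).

Lemma W_stage_mono c x t t' : t <= t' -> W_stage c x t -> W_stage c x t'.
Proof. intros H [k [Hk Hd]]. exists k. split; auto. lia. Qed.

Lemma W_iff_stage c x : W c x <-> exists t, W_stage c x t.
Proof.
  split.
  - intros [y [fl E]]. destruct (eval_derivable _ _ _ _ E) as [L [HL HJ]].
    apply in_map_iff in HJ as [e [He HeL]].
    apply in_split in HeL as [L1 [L2 ->]]. apply derivation_suffix in HL.
    exists (encode (e :: L2)), (encode (e :: L2)). rewrite decode_encode.
    split; auto. split; auto. exists e, L2. split; auto. exists y. auto.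
  - intros [t [k [_ [Hd [e [l [Ek [y Hy]]]]]]]]. exists y. apply phi_evals.
    apply claim_true_eval. rewrite <- Hy. apply (derivation_sound _ Hd).
    rewrite Ek. now left.
Qed.

Definition peval_claim (p q r : prog) : prog := PPair (pconst 0) (PPair p (PPair q r)).
Definition psearch_claim (p q r s : prog) : prog :=
  PPair (pconst 1) (PPair p (PPair q (PPair r s))).

Lemma den_peval_claim p q r x : den (peval_claim p q r) x = eval_claim (den p x) (den q x) (den r x).
Proof. reflexivity. Qed.

Lemma den_psearch_claim p q r s x :
  den (psearch_claim p q r s) x = search_claim (den p x) (den q x) (den r x) (den s x).
Proof. reflexivity. Qed.

Definition pmem_claims : prog := pexists_in (peqb (pfst PSnd) (pfst PFst)) PSnd.

Lemma holds_pmem_claims J L :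
  den pmem_claims (pair J L) = 0 <-> In J (map entry_claim (decode L)).
Proof.
  unfold pmem_claims. rewrite holds_pexists_in, in_map_iff. autorewrite with den unpair.
  split; intros [y [H1 H2]]; exists y; revert H1 H2; autorewrite with den unpair;
    rewrite bool_code_eq_0, Nat.eqb_eq; auto.
Qed.

#[local] Hint Rewrite den_peval_claim den_psearch_claim : den.

Section JustifiedProgram.
Let entry := pfst PId.
Let lst := psnd PId.
Let claim := pfst entry.
Let hint := psnd entry.
Let d := psnd claim.
Let mem (J : prog) := PComp pmem_claims (PPair J lst).
Let c := pfst d.
Let x := pfst (psnd d).
Let y := psnd (psnd d).
Let tag := pfst c.
Let f := pfst (psnd c).
Let g := psnd (psnd c).

Definition peval_step : prog :=
  pif_eq tag 0 (peqb y (pconst 0)) (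
  pif_eq tag 1 (peqb y (PComp PSucc x)) (
  pif_eq tag 2 (peqb y (pfst x)) (
  pif_eq tag 3 (peqb y (psnd x)) (
  pif_eq tag 4 (pand (mem (peval_claim f x (pfst y))) (mem (peval_claim g x (psnd y)))) (
  pif_eq tag 5 (pand (mem (peval_claim g x hint)) (mem (peval_claim f hint y))) (
  pif_eq tag 6 (pif0 (psnd x) (mem (peval_claim f (pfst x) y))
                 (pand (mem (peval_claim c (PPair (pfst x) (PComp ppred (psnd x))) hint))
                       (mem (peval_claim g (PPair (pfst x) (PPair (PComp ppred (psnd x)) hint)) y)))) (
  pif_eq tag 7 (mem (psearch_claim (psnd c) x (pconst 0) y))
  (peqb y x)))))))).

Let sf := pfst d.
Let sx := pfst (psnd d).
Let si := pfst (psnd (psnd d)).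
Let sr := psnd (psnd (psnd d)).

Definition psearch_step : prog :=
  pif0 (peqb sr si) (mem (peval_claim sf (PPair sx si) (pconst 0)))
    (pand (pnot hint) (pand (mem (peval_claim sf (PPair sx si) hint))
                            (mem (psearch_claim sf sx (PComp PSucc si) sr)))).

Definition pjustified : prog :=
  pif_eq (pfst claim) 0 peval_step (pif_eq (pfst claim) 1 psearch_step (pconst 1)).
End JustifiedProgram.

Lemma holds_pjustified e L : den pjustified (pair e L) = 0 <->
  justified (entry_claim e) (snd (unpair e)) (fun J => In J (map entry_claim (decode L))).
Proof.
  unfold pjustified, peval_step, psearch_step.
  rewrite (justified_ext _ _ _ (fun J => den pmem_claims (pair J L) = 0))
    by (intros; symmetry; apply holds_pmem_claims).
  autorewrite with den unpair.
  unfold justified, eval_step, search_step, entry_claim.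
  set (j := fst (unpair e)). set (d := snd (unpair j)).
  destruct (fst (unpair j)) as [|[|k]]; cbn [Nat.eqb].
  - set (c := fst (unpair d)). set (x := fst (unpair (snd (unpair d)))).
    destruct (fst (unpair c)) as [|[|[|[|[|[|[|[|tag]]]]]]]]; cbn [Nat.eqb];
      rewrite ?Nat.eq_add_0, ?bool_code_eq_0, ?Nat.eqb_eq; try tauto.
    destruct (snd (unpair x)); cbn [Nat.pred]; rewrite ?Nat.eq_add_0; tauto.
  - set (i := fst (unpair (snd (unpair (snd (unpair d)))))).
    set (r := snd (unpair (snd (unpair (snd (unpair d)))))).
    destruct (r =? i); cbn [bool_code]; [tauto|].
    rewrite !Nat.eq_add_0. destruct (snd (unpair e)); cbn; intuition congruence.
  - split; [discriminate|tauto].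
Qed.

Lemma derivation_nth l : derivation l <-> forall m, m < length l ->
  justified (entry_claim (nth m l 0)) (snd (unpair (nth m l 0)))
    (fun J => In J (map entry_claim (skipn (S m) l))).
Proof.
  induction l as [|e l IH]; cbn.
  - split; auto. lia.
  - rewrite IH. split.
    + intros [H1 H2] [|m] Hm; auto. apply H2. lia.
    + intros H. split; [apply (H 0); lia|]. intros m Hm. apply (H (S m)). lia.
Qed.

Definition pderivation : prog :=
  pforall (PComp pjustified
             (PPair (pnth (psnd PFst) PSnd)
                    (PPair (papp2 psub (pfst PFst) (PComp PSucc PSnd))
                           (psnd (papp2 pdrop (psnd PFst) PSnd)))))
          (pfst PId).

Lemma holds_pderivation L : den pderivation L = 0 <-> derivation (decode L).
Proof.
  unfold pderivation. rewrite holds_pforall, derivation_nth. unfold decode.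
  rewrite length_decode_list. autorewrite with den unpair.
  set (n := fst (unpair L)). set (b := snd (unpair L)).
  split; intros H m Hm; specialize (H m Hm); revert H; autorewrite with den unpair;
    rewrite holds_pjustified, den_pdrop, nth_decode_list by auto;
    apply justified_ext; intros J; unfold decode; autorewrite with unpair;
    rewrite skipn_decode_list by lia; reflexivity.
Qed.

Lemma decode_cons_iff L (Q : nat -> Prop) :
  (exists e l, decode L = e :: l /\ Q e) <-> 0 < fst (unpair L) /\ Q (fst (unpair (snd (unpair L)))).
Proof.
  unfold decode. destruct (fst (unpair L)); cbn.
  - split; [intros (e & l & [=] & _)|lia].
  - split; [intros (e & l & [= <- _] & HQ); auto with arith|intros [_ HQ]; eauto].
Qed.

Section StageProgram.
Let input := PFst.
Let k := PSnd.
Let c := pfst (pfst input).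
Let x := psnd (pfst input).
Let head_claim := pfst (pfst (psnd k)).

Definition pW_stage_at : prog :=
  pand (pltb (pconst 0) (pfst k))
  (pand (pand (peqb (pfst head_claim) (pconst 0))
        (pand (peqb (pfst (psnd head_claim)) c) (peqb (pfst (psnd (psnd head_claim))) x)))
        (PComp pderivation k)).

Definition pW_stage : prog := pexists pW_stage_at (PComp PSucc PSnd).
End StageProgram.

Lemma holds_pW_stage c x t : den pW_stage (pair (pair c x) t) = 0 <-> W_stage c x t.
Proof.
  unfold pW_stage, W_stage. rewrite holds_pexists. autorewrite with den unpair.
  apply Morphisms_Prop.ex_iff_morphism. intros k.
  rewrite decode_cons_iff, claims_eval_iff. unfold pW_stage_at. autorewrite with den unpair.
  rewrite !Nat.eq_add_0, !bool_code_eq_0, !Nat.eqb_eq, Nat.ltb_lt, holds_pderivation.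
  unfold entry_claim. intuition lia.
Qed.

Definition plift (p : prog) : prog := PComp p PFst.

Lemma den_plift p x y : den (plift p) (pair x y) = den p x.
Proof. unfold plift. now autorewrite with den unpair. Qed.

Definition pin (a l : prog) : prog := pexists_in (peqb PSnd (plift a)) l.

Lemma holds_pin a l x : den (pin a l) x = 0 <-> In (den a x) (decode (den l x)).
Proof.
  unfold pin. rewrite holds_pexists_in.
  split; [intros [y [Hy H]]|intros H; exists (den a x); split; auto];
    revert H; rewrite holds_peqb, den_plift; autorewrite with den unpair; congruence.
Qed.

Definition pincl (l1 l2 : prog) : prog := pforall_in (pin PSnd (plift l2)) l1.

Lemma holds_pincl l1 l2 x : den (pincl l1 l2) x = 0 <-> incl (decode (den l1 x)) (decode (den l2 x)).
Proof.
  unfold pincl. rewrite holds_pforall_in.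
  split; intros H y Hy; specialize (H y Hy); revert H;
    rewrite holds_pin, den_plift; autorewrite with den unpair; auto.
Qed.

Definition pW (c x s : prog) : prog := PComp pW_stage (PPair (PPair c x) s).

Lemma holds_pW c x s z : den (pW c x s) z = 0 <-> W_stage (den c z) (den x z) (den s z).
Proof. unfold pW. autorewrite with den. apply holds_pW_stage. Qed.

Definition pparity : prog := ploop PZero (pnot loop_acc) PId.
Definition pdiv2 : prog := ploop PZero (papp2 padd loop_acc (PComp pparity loop_index)) PId.

Lemma den_pparity n : den pparity n = bool_code (Nat.even n).
Proof.
  unfold pparity. rewrite den_ploop, den_PId. set (a := n) at 1. clearbody a.
  induction n as [|n IH]; [reflexivity|].
  rewrite rec_den_succ, den_pnot, IH, Nat.even_succ, <- Nat.negb_even.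
  cbn [den loop_acc]. autorewrite with unpair. now destruct (Nat.even n).
Qed.

Lemma div2_succ m : Nat.div2 (S m) = Nat.div2 m + bool_code (Nat.even m).
Proof.
  induction m as [m IH] using (well_founded_induction lt_wf).
  destruct m as [|[|m]]; [reflexivity|reflexivity|].
  change (S (Nat.div2 (S m)) = S (Nat.div2 m) + bool_code (Nat.even m)).
  rewrite IH by lia. lia.
Qed.

Lemma den_pdiv2 n : den pdiv2 n = Nat.div2 n.
Proof.
  unfold pdiv2. rewrite den_ploop, den_PId. set (a := n) at 1. clearbody a.
  induction n as [|n IH]; [reflexivity|].
  rewrite rec_den_succ, den_papp2, den_padd, den_PComp, div2_succ, <- IH, <- den_pparity.
  cbn [den loop_acc loop_index]. now autorewrite with unpair.
Qed.

(** * The new relation *)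

Definition tag_of (k : nat) : nat := fst (unpair k).
Definition stage_of (k : nat) : nat := fst (unpair (snd (unpair k))).
Definition bound_of (k : nat) : nat := fst (unpair (snd (unpair (snd (unpair k))))).
Definition set_of (k : nat) : list nat := decode (snd (unpair (snd (unpair (snd (unpair k)))))).
Definition point_of (k : nat) : nat := Nat.div2 (tag_of k).

Definition mk_code (m s c : nat) (H : list nat) : nat := pair m (pair s (pair c (encode H))).

Lemma tag_of_mk m s c H : tag_of (mk_code m s c H) = m.
Proof. unfold tag_of, mk_code. now autorewrite with unpair. Qed.
Lemma stage_of_mk m s c H : stage_of (mk_code m s c H) = s.
Proof. unfold stage_of, mk_code. now autorewrite with unpair. Qed.
Lemma bound_of_mk m s c H : bound_of (mk_code m s c H) = c.
Proof. unfold bound_of, mk_code. now autorewrite with unpair. Qed.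
Lemma set_of_mk m s c H : set_of (mk_code m s c H) = H.
Proof. unfold set_of, mk_code. autorewrite with unpair. apply decode_encode. Qed.

Definition coherent (e u k : nat) : Prop :=
  (forall y, y < bound_of k ->
     (W_stage e (pair y (point_of k)) (stage_of k) -> In y (set_of k)) /\
     (forall z, In z (set_of k) -> W_stage e (pair y z) (stage_of k) -> In y (set_of k))) /\
  (forall y, In y (set_of k) -> W_stage e (pair y (point_of k)) (stage_of k)) /\
  (if Nat.even (tag_of k) then exists y, In y (set_of k) /\ W_stage u y (stage_of k)
   else forall y, In y (set_of k) -> ~ W_stage u y (stage_of k)).

Definition sqsubset (e u k1 k2 : nat) : Prop :=
  (Nat.even (tag_of k1) = false -> Nat.even (tag_of k2) = false) /\
  stage_of k1 < stage_of k2 /\ bound_of k1 < bound_of k2 /\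
  In (point_of k1) (set_of k2) /\ incl (set_of k1) (set_of k2) /\ coherent e u k2.

Lemma sqsubset_trans e u : transitive (sqsubset e u).
Proof.
  intros k1 k2 k3 (T1 & S1 & B1 & P1 & I1 & _) (T2 & S2 & B2 & P2 & I2 & C2).
  split; [auto|]. split; [lia|]. split; [lia|].
  split; [auto|]. split; [|exact C2]. intros y Hy. auto.
Qed.

Definition ptag (k : prog) : prog := pfst k.
Definition pstage (k : prog) : prog := pfst (psnd k).
Definition pbound (k : prog) : prog := pfst (psnd (psnd k)).
Definition pset (k : prog) : prog := psnd (psnd (psnd k)).
Definition ppoint (k : prog) : prog := PComp pdiv2 (ptag k).
Definition peven_tag (k : prog) : prog := PComp pparity (ptag k).

Lemma den_ptag k x : den (ptag k) x = tag_of (den k x). Proof. reflexivity. Qed.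
Lemma den_pstage k x : den (pstage k) x = stage_of (den k x). Proof. reflexivity. Qed.
Lemma den_pbound k x : den (pbound k) x = bound_of (den k x). Proof. reflexivity. Qed.
Lemma decode_pset k x : decode (den (pset k) x) = set_of (den k x). Proof. reflexivity. Qed.
Lemma den_ppoint k x : den (ppoint k) x = point_of (den k x).
Proof. unfold ppoint. now rewrite den_PComp, den_pdiv2. Qed.
Lemma den_peven_tag k x : den (peven_tag k) x = bool_code (Nat.even (tag_of (den k x))).
Proof. unfold peven_tag. now rewrite den_PComp, den_pparity. Qed.
Lemma holds_peven_tag k x : den (peven_tag k) x = 0 <-> Nat.even (tag_of (den k x)) = true.
Proof. now rewrite den_peven_tag, bool_code_eq_0. Qed.

#[local] Hint Rewrite holds_pand holds_pnot holds_pimp holds_peqb holds_pltb holds_pforall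
  holds_pforall_in holds_pexists_in holds_pin holds_pincl holds_pW holds_peven_tag
  Bool.not_true_iff_false : holds.
#[local] Hint Rewrite den_plift den_ptag den_pstage den_pbound decode_pset den_ppoint : fields.

Ltac den_simpl :=
  rewrite_strat (repeat (outermost (choice (hints holds)
                                   (choice (hints fields) (choice (hints den) (hints unpair)))))).

Definition pcoherent (e u k : prog) : prog :=
  pand (pforall
          (pand (pimp (pW (plift e) (PPair PSnd (ppoint (plift k))) (pstage (plift k)))
                      (pin PSnd (pset (plift k))))
                (pforall_in (pimp (pW (plift (plift e)) (PPair (plift PSnd) PSnd)
                                      (pstage (plift (plift k))))
                                  (pin (plift PSnd) (pset (plift (plift k)))))
                            (pset (plift k))))
          (pbound k))
  (pand (pforall_in (pW (plift e) (PPair PSnd (ppoint (plift k))) (pstage (plift k))) (pset k))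
        (pif0 (peven_tag k) (pexists_in (pW (plift u) PSnd (pstage (plift k))) (pset k))
                            (pforall_in (pnot (pW (plift u) PSnd (pstage (plift k)))) (pset k)))).

Lemma holds_pcoherent e u k x :
  den (pcoherent e u k) x = 0 <-> coherent (den e x) (den u x) (den k x).
Proof.
  unfold pcoherent, coherent. rewrite holds_pand, holds_pand, den_pif0, den_peven_tag.
  destruct (Nat.even _); cbn [bool_code]; den_simpl; reflexivity.
Qed.

Section SqsubsetProgram.
Let e := pfst PFst.
Let u := psnd PFst.
Let k1 := pfst PSnd.
Let k2 := psnd PSnd.

Definition psqsubset : prog :=
  pand (pimp (pnot (peven_tag k1)) (pnot (peven_tag k2)))
  (pand (pltb (pstage k1) (pstage k2))
  (pand (pltb (pbound k1) (pbound k2))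
  (pand (pin (ppoint k1) (pset k2))
  (pand (pincl (pset k1) (pset k2))
        (pcoherent e u k2))))).
End SqsubsetProgram.

Lemma holds_psqsubset e u k1 k2 :
  den psqsubset (pair (pair e u) (pair k1 k2)) = 0 <-> sqsubset e u k1 k2.
Proof. unfold psqsubset, sqsubset. den_simpl. rewrite holds_pcoherent. den_simpl. reflexivity. Qed.

Definition sqsubset_index (e u : nat) : nat :=
  mu (PComp psqsubset (PPair (PPair (pconst e) (pconst u)) PFst)).

Lemma ce_rel_sqsubset_index e u a b : ce_rel (sqsubset_index e u) a b <-> sqsubset e u a b.
Proof.
  unfold ce_rel, sqsubset_index. rewrite W_mu, <- holds_psqsubset.
  split; [intros [i H]|intros H; exists 0]; revert H; now autorewrite with den unpair.
Qed.

Definition pcode_const : prog :=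
  ploop (pconst (code PZero)) (PPair (pconst 5) (PPair (pconst (code PSucc)) loop_acc)) PId.

Lemma den_pcode_const n : den pcode_const n = code (pconst n).
Proof.
  unfold pcode_const. rewrite den_ploop, den_PId. set (a := n) at 1. clearbody a.
  induction n as [|n IH]; [apply den_pconst|].
  rewrite rec_den_succ, IH. cbn [den loop_acc]. now autorewrite with den unpair.
Qed.

Definition psqsubset_index : prog :=
  PPair (pconst 7) (PPair (pconst 5) (PPair (pconst (code psqsubset)) (PPair (pconst 4)
    (PPair (PPair (pconst 4) (PPair (PComp pcode_const PFst) (PComp pcode_const PSnd)))
           (pconst (code PFst)))))).

Lemma sqsubset_index_computable : computable2 sqsubset_index.
Proof.
  exists (code psqsubset_index). intros e u.
  replace (sqsubset_index e u) with (den psqsubset_index (pair e u)); [apply phi_code|].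
  unfold psqsubset_index. autorewrite with den unpair. now rewrite !den_pcode_const.
Qed.

Definition project_preimage_index : nat := mu (peqb (pfst PFst) (ptag (psnd PFst))).

Lemma W_project_preimage_index n k : W project_preimage_index (pair n k) <-> n = tag_of k.
Proof.
  unfold project_preimage_index. rewrite W_mu.
  split; [intros [i H]|intros H; exists 0]; revert H; now den_simpl.
Qed.

Section LiftPreimage.
Variable e : nat.
Let k := pfst PFst.
Let m := psnd PFst.
Let t := PSnd.

Definition plift_preimage : prog :=
  pand (peqb (PComp pparity m) (peven_tag k))
  (pand (pW (pconst e) (PPair (ppoint k) (PComp pdiv2 m)) t)
        (pforall_in (pW (pconst e) (PPair PSnd (PComp pdiv2 (plift m))) (plift t)) (pset k))).
End LiftPreimage.

Definition lift_preimage_index (e : nat) : nat := mu (plift_preimage e).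

Lemma W_lift_preimage_index e k m : W (lift_preimage_index e) (pair k m) <->
  exists t, Nat.even m = Nat.even (tag_of k) /\
    W_stage e (pair (point_of k) (Nat.div2 m)) t /\
    forall y, In y (set_of k) -> W_stage e (pair y (Nat.div2 m)) t.
Proof.
  unfold lift_preimage_index, plift_preimage. rewrite W_mu.
  apply Morphisms_Prop.ex_iff_morphism. intros t.
  den_simpl. rewrite den_peven_tag, !den_pparity, !den_pdiv2, bool_code_inj.
  now autorewrite with den unpair.
Qed.

(** * Ideals of the new relation *)

Lemma le_list_max l y : In y l -> y <= list_max l.
Proof. revert y. apply Forall_forall, list_max_le, le_n. Qed.

Lemma finite_restriction (P : nat -> Prop) c : exists L, forall y, In y L <-> y < c /\ P y.
Proof.
  induction c as [|c [L HL]]; [exists []; cbn; lia|].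
  destruct (classic (P c)) as [Pc|nPc]; [exists (c :: L)|exists L]; intros y; cbn; rewrite HL.
  - split; [intros [<-|[H1 H2]]; auto with arith|].
    intros [H1 H2]. destruct (Nat.eq_dec c y); auto. right. split; auto. lia.
  - split; [intros [H1 H2]; auto with arith|].
    intros [H1 H2]. split; auto. destruct (Nat.eq_dec c y); [subst; tauto|lia].
Qed.

Lemma common_stage (P : nat -> nat -> Prop) (L : list nat) :
  (forall y s s', s <= s' -> P y s -> P y s') -> (forall y, In y L -> exists s, P y s) ->
  forall N, exists s, N <= s /\ forall y, In y L -> P y s.
Proof.
  intros Hmono. induction L as [|a L IH]; intros H N; [exists N; split; [lia|intros _ []]|].
  destruct IH with (N := N) as [s [Hs HL]]; [intros; apply H; now right|].
  destruct (H a) as [sa Ha]; [now left|].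
  exists (s + sa). split; [lia|]. intros y [<-|Hy]; eapply Hmono; [|exact Ha| |apply HL; auto]; lia.
Qed.

Lemma ideal_upper_bound (R : nat -> nat -> Prop) (I : nat -> Prop) : transitive R ->
  is_ideal R I -> forall L, (forall y, In y L -> I y) -> exists b, I b /\ forall y, In y L -> R y b.
Proof.
  intros Htr [[n In_n] [_ Hdir]].
  induction L as [|a L IH]; intros HL; [exists n; split; [exact In_n|intros _ []]|].
  destruct IH as [b [Ib Hb]]; [intros; apply HL; now right|].
  destruct (Hdir a b) as [c [Ic [Hac Hbc]]]; [apply HL; now left|auto|].
  exists c. split; auto. intros y [<-|Hy]; eauto.
Qed.

Definition base_code (n : nat) : nat := mk_code (2 * n) 0 0 [].

Lemma point_of_base_code n : point_of (base_code n) = n.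
Proof. unfold point_of, base_code. rewrite tag_of_mk. apply Nat.div2_double. Qed.

Section Ideals.
Variables e u : nat.
Hypothesis trans_e : transitive (ce_rel e).

Lemma ce_rel_of_stage y z s : W_stage e (pair y z) s -> ce_rel e y z.
Proof. intros H. apply W_iff_stage. eauto. Qed.

Lemma base_code_sqsubset n k : coherent e u k -> 0 < stage_of k -> 0 < bound_of k ->
  In n (set_of k) -> sqsubset e u (base_code n) k.
Proof.
  intros Hk Hs Hb Hn. unfold sqsubset, base_code.
  rewrite tag_of_mk, stage_of_mk, bound_of_mk, set_of_mk, Nat.even_even.
  rewrite <- (point_of_base_code n) in Hn. unfold base_code in Hn.
  split; [intros [=]|]. split; [lia|]. split; [lia|]. split; [exact Hn|].
  split; [intros y []|exact Hk].
Qed.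

Definition avoids (I : nat -> Prop) : Prop := forall x, W u x -> ~ I x.

Definition lift (I : nat -> Prop) (k : nat) : Prop :=
  I (point_of k) /\ (forall y, In y (set_of k) -> I y) /\ (Nat.even (tag_of k) = false -> avoids I).

Definition project (J : nat -> Prop) (n : nat) : Prop := exists k, J k /\ point_of k = n.

Section Lift.
Variable I : nat -> Prop.
Hypothesis ideal_I : is_ideal (ce_rel e) I.

(* The code with point an upper bound [b] of all elements of [I] below [c], whose set
   consists of these elements, at a stage where they are all enumerated below [b]. *)
Lemma coherent_code_exists c N (even : bool) :
  (even = false -> avoids I) -> (even = true -> exists y, y < c /\ I y /\ W_stage u y N) ->
  exists k, lift I k /\ coherent e u k /\ N <= stage_of k /\ bound_of k = c /\
    Nat.even (tag_of k) = even /\ forall y, y < c -> I y -> In y (set_of k).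
Proof.
  intros Hodd Heven. pose proof ideal_I as [_ [Hlow _]].
  destruct (finite_restriction I c) as [H HH].
  destruct (ideal_upper_bound _ I trans_e ideal_I H) as [b [Ib Hb]]; [intros y Hy; now apply HH|].
  destruct (common_stage (fun y s => W_stage e (pair y b) s) H) with (N := N) as [s [Hs Hst]].
  { intros; eapply W_stage_mono; eauto. }
  { intros y Hy. apply W_iff_stage, Hb, Hy. }
  set (k := mk_code (if even then 2 * b else 2 * b + 1) s c H).
  assert (Ek : point_of k = b /\ Nat.even (tag_of k) = even).
  { unfold point_of, k. rewrite tag_of_mk. destruct even.
    - now rewrite Nat.div2_double, Nat.even_even.
    - now rewrite Nat.div2_odd', Nat.even_odd. }
  destruct Ek as [Pk Tk].
  assert (Fk : stage_of k = s /\ bound_of k = c /\ set_of k = H).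
  { unfold k. now rewrite stage_of_mk, bound_of_mk, set_of_mk. }
  exists k. unfold lift, coherent. rewrite Pk, Tk. destruct Fk as (-> & -> & ->).
  split; [split; [exact Ib|split; [intros y Hy; now apply HH in Hy|exact Hodd]]|].
  split; [split; [|split]|].
  - intros y Hy. split.
    + intros HW. apply HH. split; auto. apply (Hlow b); auto. eapply ce_rel_of_stage; eauto.
    + intros z Hz HW. apply HH. split; auto. apply HH in Hz.
      apply (Hlow z); [|tauto]. eapply ce_rel_of_stage; eauto.
  - exact Hst.
  - destruct even.
    + destruct (Heven eq_refl) as [y (Hy & Iy & Uy)].
      exists y. split; [now apply HH|]. eapply W_stage_mono; eauto.
    + intros y Hy Uy. apply HH in Hy. apply (Hodd eq_refl y); [|tauto].
      apply W_iff_stage. eauto.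
  - repeat split; auto. intros y Hy Iy. now apply HH.
Qed.

Lemma lift_code_above c N : exists k, lift I k /\ coherent e u k /\ N <= stage_of k /\
  c <= bound_of k /\ (forall y, y < c -> I y -> In y (set_of k)) /\
  (avoids I -> Nat.even (tag_of k) = false).
Proof.
  destruct (classic (avoids I)) as [HA|HnA].
  - destruct (coherent_code_exists c N false) as (k & Lk & Ck & Sk & Bk & Tk & Hk);
      [auto|discriminate|].
    exists k. do 4 (split; [auto; lia|]). auto.
  - pose proof HnA as HnA'. apply not_all_ex_not in HnA' as [x Hx].
    apply imply_to_and in Hx as [Ux Ix%NNPP].
    apply W_iff_stage in Ux as [sx Ux].
    destruct (coherent_code_exists (c + S x) (N + sx) true) as (k & Lk & Ck & Sk & Bk & Tk & Hk);
      [discriminate| |].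
    { intros _. exists x. repeat split; [lia|auto|]. eapply W_stage_mono; [|exact Ux]. lia. }
    exists k. do 4 (split; [auto; lia|]). split; [|intros HA; contradiction].
    intros y Hy Iy. apply Hk; auto. lia.
Qed.

Lemma sqsubset_of_lift k k' : lift I k -> coherent e u k' ->
  stage_of k < stage_of k' -> bound_of k < bound_of k' ->
  (forall y, In y (point_of k :: set_of k) -> In y (set_of k')) ->
  (avoids I -> Nat.even (tag_of k') = false) -> sqsubset e u k k'.
Proof.
  intros (_ & _ & Tk) Ck' Hs Hb Hset Tk'.
  split; [auto|]. split; [lia|]. split; [lia|]. split; [now apply Hset; left|].
  split; [intros y Hy; now apply Hset; right|exact Ck'].
Qed.

Lemma lift_ideal : is_ideal (sqsubset e u) (lift I).
Proof.
  pose proof ideal_I as [[n In_n] [Hlow Hdir]]. split; [|split].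
  - exists (base_code n). unfold lift. rewrite point_of_base_code.
    unfold base_code. rewrite set_of_mk, tag_of_mk, Nat.even_even.
    repeat split; auto; [intros y []|discriminate].
  - intros k2 k1 (T & _ & _ & P & Inc & _) (I2 & H2 & A2). repeat split; auto.
  - intros k1 k2 L1 L2. pose proof L1 as (I1 & H1 & _). pose proof L2 as (I2 & H2 & _).
    set (l := point_of k1 :: point_of k2 :: set_of k1 ++ set_of k2).
    destruct (lift_code_above (S (bound_of k1 + bound_of k2 + list_max l))
                (S (stage_of k1 + stage_of k2))) as (k & Lk & Ck & Sk & Bk & Hk & Tk).
    assert (Hl : forall y, In y l -> y < S (bound_of k1 + bound_of k2 + list_max l) /\ I y).
    { intros y Hy. split; [apply le_list_max in Hy; lia|].
      destruct Hy as [<-|[<-|Hy]]; auto. apply in_app_or in Hy as [Hy|Hy]; auto. }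
    exists k. split; auto. split; apply sqsubset_of_lift; auto; try lia;
      intros y Hy; apply Hk; apply Hl; unfold l; cbn in Hy |- *; destruct Hy as [<-|Hy];
      auto; right; right; apply in_or_app; auto.
Qed.
End Lift.

Lemma project_lift I : is_ideal (ce_rel e) I -> forall n, project (lift I) n <-> I n.
Proof.
  intros HI n. split.
  - intros [k [(Ik & _ & _) <-]]. exact Ik.
  - intros In_n. exists (base_code n). split; [|apply point_of_base_code].
    unfold lift. rewrite point_of_base_code.
    unfold base_code. rewrite set_of_mk, tag_of_mk, Nat.even_even.
    repeat split; auto; [intros y []|discriminate].
Qed.

Section Project.
Variable J : nat -> Prop.
Hypothesis ideal_J : is_ideal (sqsubset e u) J.

Lemma ideal_code_above k N : J k ->
  exists k', J k' /\ sqsubset e u k k' /\ N <= stage_of k' /\ N <= bound_of k'.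
Proof.
  pose proof ideal_J as [_ [_ Hdir]]. intros Jk.
  induction N as [|N (k' & Jk' & Hkk' & HS & HB)].
  - destruct (Hdir k k Jk Jk) as (k' & Jk' & Hkk' & _). exists k'. split; [auto|]. split; [auto|lia].
  - destruct (Hdir k' k' Jk' Jk') as (k'' & Jk'' & Hk'k'' & _).
    pose proof Hk'k'' as (_ & HS' & HB' & _).
    exists k''. split; auto. split; [eapply sqsubset_trans; eauto|lia].
Qed.

Lemma project_lower y n : ce_rel e y n -> project J n -> project J y.
Proof.
  intros Hyn [k [Jk <-]]. apply W_iff_stage in Hyn as [s Hs].
  destruct (ideal_code_above k (S (s + y)) Jk) as (k' & Jk' & Hkk' & HS & HB).
  pose proof Hkk' as (_ & _ & _ & Hin & _ & Ck'). pose proof Ck' as (Hclosed & _).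
  assert (Hy : In y (set_of k')).
  { apply (proj2 (Hclosed y ltac:(lia)) (point_of k)); auto.
    eapply W_stage_mono; [|exact Hs]. lia. }
  exists (base_code y). split; [|apply point_of_base_code].
  destruct ideal_J as [_ [Hlow _]]. apply (Hlow k'); auto.
  apply base_code_sqsubset; auto; lia.
Qed.

Lemma project_set_of k : J k -> forall y, In y (set_of k) -> project J y.
Proof.
  intros Jk y Hy. destruct (ideal_code_above k 0 Jk) as (k' & Jk' & Hkk' & _).
  pose proof Hkk' as (_ & _ & _ & _ & Hincl & (_ & Hcert & _)).
  apply (project_lower y (point_of k')); [|now exists k'].
  eapply ce_rel_of_stage. apply Hcert. auto.
Qed.

Lemma project_ideal : is_ideal (ce_rel e) (project J).
Proof.
  pose proof ideal_J as [[k0 Jk0] [_ Hdir]]. split; [|split].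
  - now exists (point_of k0), k0.
  - intros a b Hba Ha. eapply project_lower; eauto.
  - intros a b [ka [Ja <-]] [kb [Jb <-]]. destruct (Hdir ka kb Ja Jb) as [c [Jc [H1 H2]]].
    exists (point_of c). split; [now exists c|].
    pose proof H1 as (_ & _ & _ & Pa & _ & (_ & Hcert & _)).
    pose proof H2 as (_ & _ & _ & Pb & _ & _).
    split; eapply ce_rel_of_stage; apply Hcert; auto.
Qed.

Lemma odd_code_iff_avoids :
  (exists k, J k /\ Nat.even (tag_of k) = false) <-> avoids (project J).
Proof.
  pose proof ideal_J as [[k0 Jk0] [_ Hdir]]. split.
  - intros [k [Jk Ek]] x Ux [kx [Jkx <-]].
    destruct (Hdir k kx Jk Jkx) as [k' [Jk' [H1 H2]]].
    pose proof H1 as (T1 & _). pose proof H2 as (_ & _ & _ & Px & _).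
    apply W_iff_stage in Ux as [s Us].
    destruct (ideal_code_above k' s Jk') as (k'' & Jk'' & Hk'k'' & HS & _).
    pose proof Hk'k'' as (T2 & _ & _ & _ & Inc & (_ & _ & Typed)).
    rewrite (T2 (T1 Ek)) in Typed. apply (Typed (point_of kx)); [now apply Inc|].
    eapply W_stage_mono; [|exact Us]. exact HS.
  - intros HA. destruct (ideal_code_above k0 0 Jk0) as (k' & Jk' & Hk' & _).
    exists k'. split; auto. destruct (Nat.even (tag_of k')) eqn:E; auto. exfalso.
    pose proof Hk' as (_ & _ & _ & _ & _ & (_ & _ & Typed)). rewrite E in Typed.
    destruct Typed as [y [Hy Uy]]. apply (HA y); [apply W_iff_stage; eauto|].
    eapply project_set_of; eauto.
Qed.

Lemma codes_of_list L : (forall y, In y L -> project J y) ->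
  exists Ks, (forall k, In k Ks -> J k) /\
    forall y, In y L -> exists k, In k Ks /\ point_of k = y.
Proof.
  induction L as [|a L IH]; intros H; [exists []; cbn; tauto|].
  destruct IH as [Ks [H1 H2]]; [intros; apply H; now right|].
  destruct (H a) as [ka [Ja Ea]]; [now left|].
  exists (ka :: Ks). split; [intros k [<-|Hk]; auto|].
  intros y [<-|Hy]; [exists ka; cbn; auto|]. destruct (H2 y Hy) as [k [Hk Ek]].
  exists k. cbn. auto.
Qed.

Lemma lift_project k : J k <-> lift (project J) k.
Proof.
  pose proof ideal_J as [[k0 Jk0] [Hlow _]]. split.
  - intros Jk. split; [now exists k|]. split; [now apply project_set_of|].
    intros E. apply odd_code_iff_avoids. eauto.
  - intros (Pk & Hset & Hodd).
    destruct (codes_of_list (point_of k :: set_of k)) as [Ks [HKs HKsL]];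
      [intros y [<-|Hy]; auto|].
    assert (Hk1 : exists k1, J k1 /\ (Nat.even (tag_of k) = false -> Nat.even (tag_of k1) = false)).
    { destruct (Nat.even (tag_of k)) eqn:E; [exists k0; split; [auto|discriminate]|].
      destruct (proj2 odd_code_iff_avoids (Hodd eq_refl)) as [k1 [Jk1 E1]]. eauto. }
    destruct Hk1 as [k1 [Jk1 Ek1]].
    destruct (ideal_upper_bound _ J (sqsubset_trans e u) ideal_J (k1 :: Ks)) as [k' [Jk' Hk']];
      [intros kk [<-|Hkk]; auto|].
    destruct (ideal_code_above k' (S (stage_of k + bound_of k)) Jk') as (k'' & Jk'' & H1 & HS & HB).
    apply (Hlow k'' k); auto.
    assert (Hin : forall y, In y (point_of k :: set_of k) -> In y (set_of k'')).
    { intros y Hy. destruct (HKsL y Hy) as [ky [Hky <-]].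
      assert (sqsubset e u ky k'') as (_ & _ & _ & Py & _) by
        (eapply sqsubset_trans; [apply Hk'; now right|exact H1]).
      exact Py. }
    assert (Tk'' : Nat.even (tag_of k) = false -> Nat.even (tag_of k'') = false).
    { intros E. assert (sqsubset e u k1 k'') as (T & _) by
        (eapply sqsubset_trans; [apply Hk'; now left|exact H1]). auto. }
    pose proof H1 as (_ & _ & _ & _ & _ & Ck'').
    split; [exact Tk''|]. split; [lia|]. split; [lia|]. split; [apply Hin; now left|].
    split; [intros y Hy; apply Hin; now right|exact Ck''].
Qed.
End Project.
End Ideals.

(** * The computable homeomorphism *)

Lemma is_ideal_ext (R1 R2 : nat -> nat -> Prop) (I : nat -> Prop) :
  (forall a b, R1 a b <-> R2 a b) -> is_ideal R1 I -> is_ideal R2 I.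
Proof.
  intros H [Hne [Hlow Hdir]]. split; [exact Hne|split].
  - intros a b Hba. apply Hlow, H, Hba.
  - intros a b Ha Hb. destruct (Hdir a b Ha Hb) as [c [Hc [Hac Hbc]]].
    exists c. repeat split; auto; apply H; auto.
Qed.

Section Homeomorphism.
Variables e u : nat.
Hypothesis trans_e : transitive (ce_rel e).

Let X := ideals (ce_rel (sqsubset_index e u)).
Let Y := ideals (ce_rel e).

Lemma ideal_sqsubset_index J : is_ideal (ce_rel (sqsubset_index e u)) J <-> is_ideal (sqsubset e u) J.
Proof. split; apply is_ideal_ext; intros a b; [|symmetry]; apply ce_rel_sqsubset_index. Qed.

Definition project_map (J : X) : Y :=
  exist _ (project (proj1_sig J))
    (project_ideal e u _ (proj1 (ideal_sqsubset_index _) (proj2_sig J))).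

Definition lift_map (I : Y) : X :=
  exist _ (lift u (proj1_sig I))
    (proj2 (ideal_sqsubset_index _) (lift_ideal e u trans_e _ (proj2_sig I))).

Lemma lift_map_project_map J : lift_map (project_map J) = J.
Proof.
  destruct J as [J HJ]. apply subset_eq_compat. cbn.
  apply functional_extensionality. intros k. apply propositional_extensionality.
  symmetry. apply (lift_project e). now apply ideal_sqsubset_index.
Qed.

Lemma project_map_lift_map I : project_map (lift_map I) = I.
Proof.
  destruct I as [I HI]. apply subset_eq_compat. cbn.
  apply functional_extensionality. intros n. apply propositional_extensionality.
  now apply (project_lift e).
Qed.

Let base_A := add_open_base (ideal_base (ce_rel e))
                (fun I : Y => forall x, W u x -> ~ proj1_sig I x).

Lemma project_map_computable :
  computable_map (ideal_base (ce_rel (sqsubset_index e u))) base_A project_map.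
Proof.
  exists project_preimage_index. intros n [J HJ]. unfold base_A, add_open_base, ideal_base.
  cbn. setoid_rewrite W_project_preimage_index. apply ideal_sqsubset_index in HJ.
  split.
  - intros Hn. exists (mk_code n 0 0 []). split; [now rewrite tag_of_mk|].
    apply (lift_project e u J HJ). unfold lift, point_of.
    rewrite tag_of_mk, set_of_mk. split; [|split; [intros y []|]].
    + destruct (Nat.even n); [exact Hn|exact (proj2 Hn)].
    + intros En. rewrite En in Hn. exact (proj1 Hn).
  - intros [k [-> Jk]]. assert (Pk : project J (point_of k)) by now exists k.
    unfold point_of in Pk. destruct (Nat.even (tag_of k)) eqn:E; [exact Pk|].
    split; [|exact Pk]. apply (odd_code_iff_avoids e u J HJ). eauto.
Qed.

Lemma lift_map_computable :
  computable_map base_A (ideal_base (ce_rel (sqsubset_index e u))) lift_map.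
Proof.
  exists (lift_preimage_index e). intros k [I HI]. unfold base_A, add_open_base, ideal_base.
  cbn. setoid_rewrite W_lift_preimage_index. split.
  - intros (Ip & Iset & Iodd).
    destruct (ideal_upper_bound _ I trans_e HI (point_of k :: set_of k)) as [z [Iz Hz]];
      [intros y [<-|Hy]; auto|].
    destruct (common_stage (fun y s => W_stage e (pair y z) s) (point_of k :: set_of k))
      with (N := 0) as [t [_ Ht]];
      [intros; eapply W_stage_mono; eauto|intros y Hy; now apply W_iff_stage, Hz|].
    exists (if Nat.even (tag_of k) then 2 * z else 2 * z + 1).
    destruct (Nat.even (tag_of k)) eqn:E.
    + rewrite Nat.even_even, Nat.div2_double. split; [|exact Iz].
      exists t. split; [reflexivity|]. split; [apply Ht; now left|intros y Hy; apply Ht; now right].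
    + rewrite Nat.even_odd, Nat.div2_odd'. split; [|split; [now apply Iodd|exact Iz]].
      exists t. split; [reflexivity|]. split; [apply Ht; now left|intros y Hy; apply Ht; now right].
  - intros [m [[t [Em [Hp Hset]]] Hm]]. pose proof HI as [_ [Hlow _]].
    assert (Iz : I (Nat.div2 m)) by (destruct (Nat.even m); [exact Hm|exact (proj2 Hm)]).
    split; [|split].
    + apply (Hlow (Nat.div2 m)); auto. eapply ce_rel_of_stage; eauto.
    + intros y Hy. apply (Hlow (Nat.div2 m)); auto. eapply ce_rel_of_stage; eauto.
    + intros E. rewrite E in Em. rewrite Em in Hm. exact (proj1 Hm).
Qed.

Lemma sqsubset_index_homeomorphic :
  comp_homeomorphic (ideal_base (ce_rel (sqsubset_index e u))) base_A.
Proof.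
  exists project_map, lift_map. split; [exact lift_map_project_map|].
  split; [exact project_map_lift_map|].
  split; [exact project_map_computable|exact lift_map_computable].
Qed.
End Homeomorphism.

Theorem theorem4 :
  exists t : nat -> nat -> nat, computable2 t /\
    forall e u : nat, transitive (ce_rel e) ->
      transitive (ce_rel (t e u)) /\
      comp_homeomorphic (ideal_base (ce_rel (t e u)))
        (add_open_base (ideal_base (ce_rel e))
           (fun I : ideals (ce_rel e) => forall x, W u x -> ~ proj1_sig I x)).
Proof.
  exists sqsubset_index. split; [exact sqsubset_index_computable|]. intros e u trans_e.
  split; [|now apply sqsubset_index_homeomorphic].
  intros a b c Hab Hbc. apply ce_rel_sqsubset_index.
  apply ce_rel_sqsubset_index in Hab, Hbc. eapply sqsubset_trans; eauto.
Qed.
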